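(* Let $K$ be a field of characteristic zero, $x=(x_1,\dots,x_n)$, $y=(y_1,\dots,y_n)$, let $F\in K[x]^n$ be a polynomial map and $f\in K[x]$. Set $G:=\nabla_{x,y}\big(f+y^{\mathsf T}F\big)\in K[x,y]^{2n}$. Then $\det\mathcal{J}_{x,y}G=(-1)^n(\det\mathcal{J}F)^2$, and $F$ is invertible if and only if $G$ is invertible. Furthermore, if $F$ is a Keller map, then $$\mu_1G_1+\mu_2G_2+\cdots+\mu_{2n}G_{2n}+\mu_{2n+1}$$ is irreducible for all $\mu\in K^{2n+1}$ such that $\mu_i\neq 0$ for some $i\le n$.
   Context: $\nabla_{x,y}$ is the gradient (column vector of partial derivatives) with respect to $x_1,\dots,x_n,y_1,\dots,y_n$; $y^{\mathsf T}F=\sum_j y_jF_j$. $\mathcal{J}$ denotes the Jacobian matrix. A Keller map is a polynomial map $F\in K[x]^n$ with $\det\mathcal{J}F\in K^{*}$. *)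

From HB Require Import structures.
From mathcomp Require Import all_boot all_order all_algebra.
From mathcomp Require Import mpoly.
Set Implicit Arguments. Unset Strict Implicit. Unset Printing Implicit Defensive.
Import GRing.Theory.
Local Open Scope ring_scope.

Definition ptuple (K : fieldType) (m k : nat) (F : 'I_m -> {mpoly K[k]})
  : m.-tuple {mpoly K[k]} := [tuple F i | i < m].

Definition pcomp (K : fieldType) (m : nat) (F H : 'I_m -> {mpoly K[m]})
  : 'I_m -> {mpoly K[m]} := fun i => F i \mPo ptuple H.

Definition pinvertible (K : fieldType) (m : nat) (F : 'I_m -> {mpoly K[m]}) :=
  exists H : 'I_m -> {mpoly K[m]},
    (forall i, pcomp F H i = 'X_i) /\ (forall i, pcomp H F i = 'X_i).

Definition jacobian (K : fieldType) (m : nat) (F : 'I_m -> {mpoly K[m]})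
  : 'M[{mpoly K[m]}]_m := \matrix_(i, j) (F i)^`M(j).

Definition keller (K : fieldType) (m : nat) (F : 'I_m -> {mpoly K[m]}) :=
  exists c : K, c != 0 /\ \det (jacobian F) = c%:MP.

Definition mirreducible (K : fieldType) (k : nat) (p : {mpoly K[k]}) :=
  p != 0 /\ p \isn't a GRing.unit /\
  forall q r : {mpoly K[k]}, p = q * r -> q \is a GRing.unit \/ r \is a GRing.unit.

Definition xvar (K : fieldType) (n : nat) (i : 'I_n) : {mpoly K[n + n]} :=
  'X_(lshift n i).
Definition yvar (K : fieldType) (n : nat) (i : 'I_n) : {mpoly K[n + n]} :=
  'X_(rshift n i).

Definition incx (K : fieldType) (n : nat) (p : {mpoly K[n]}) : {mpoly K[n + n]} :=
  p \mPo ptuple (@xvar K n).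

Definition gradG (K : fieldType) (n : nat) (f : {mpoly K[n]})
  (F : 'I_n -> {mpoly K[n]}) : 'I_(n + n) -> {mpoly K[n + n]} :=
  fun k => (incx f + \sum_(j < n) yvar K j * incx (F j))^`M(k).

(* The gradient map is [G = (grad f + J^T y, F)], where [J] is the Jacobian matrix of [F], so
   the Jacobian matrix of [G] is block anti-triangular with blocks [J^T] and [J], and its
   determinant is [(-1)^n (det J)^2].
   If [H] inverts [F], then [(u, v) |-> (H(v), J(H(v))^-T (u - grad f(H(v))))] inverts [G].
   Conversely an inverse [Phi] of [G] forces [det J] to be a unit, and [v |-> Phi_x(0, v)]
   inverts [F]: compose [Phi o G = id] with [x |-> (x, -J^-T grad f)], where [G = (0, F)].
   A linear combination of the [G_k] reads [a(x) + sum_j y_j c_j(x)] with [c = J mu'],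
   [mu' = (mu_1, ..., mu_n)]; for a Keller map [adj(J) J mu' = (det J) mu'] shows that the
   [c_j] generate the unit ideal. Such a polynomial has degree one in [y], so one factor of
   any factorization has degree zero in [y]; it then divides every [c_j], hence is a unit. *)

From Pilot Require Import Defs.
From HB Require Import structures.
From mathcomp Require Import all_boot all_order all_algebra.
From mathcomp Require Import mpoly.
Set Implicit Arguments.
Unset Strict Implicit.
Unset Printing Implicit Defensive.

Import GRing.Theory.
Local Open Scope ring_scope.

Lemma addn_pred_eq2 (a b : nat) :
  (0 < a)%N -> (0 < b)%N -> (a + b).-1 = 2%N -> a = 1%N \/ b = 1%N.
Proof.
case: a => [//|[|a]] _; first by left.
case: b => [//|[|b]] _; first by right.
by move=> /eqP; rewrite !addSn !addnS.
Qed.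

Lemma sum_mul_delta (R : pzSemiRingType) (m : nat) (G : 'I_m -> R) j :
  \sum_i G i * (i == j)%:R = G j.
Proof.
by rewrite (bigD1 j) //= eqxx mulr1 big1 ?addr0 // => i /negbTE ->; rewrite mulr0.
Qed.

Lemma coef1_MXaddC (R : nzRingType) (b c : R) : (b%:P * 'X + c%:P)`_1 = b.
Proof. by rewrite coefD coefMX !coefC /= addr0. Qed.

Lemma det_block_mx0 (R : comPzRingType) (n : nat) (A B C : 'M[R]_n) :
  \det (block_mx A B C 0) = (-1) ^+ n * \det B * \det C.
Proof.
(* [swap] is [block_mx 0 1 (-1) 0], factored into block-triangular matrices. *)
pose swap : 'M[R]_(n + n) := block_mx 1%:M 0 (-1%:M) 1%:M
  *m block_mx 1%:M 1%:M 0 1%:M *m block_mx 1%:M 0 (-1%:M) 1%:M.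
have swapE : block_mx A B C 0 *m swap = block_mx (- B) A 0 C.
  rewrite /swap !mulmx_block !(mul1mx, mulmx1, mul0mx, mulmx0, mulNmx, mulmxN).
  by rewrite !(addr0, add0r, subr0, subrr, addNr, mulmx0, mulmx1, mulmxN, opprK).
have /(congr1 determinant) := swapE.
rewrite !det_mulmx !det_lblock !det_ublock !det1 !mulr1 => ->.
by rewrite -scaleN1r detZ.
Qed.

Lemma mpoly_ringind (R : ringType) (m : nat) (P : {mpoly R[m]} -> Prop) :
  (forall c, P c%:MP) -> (forall i, P 'X_i) ->
  (forall p q, P p -> P q -> P (p + q)) ->
  (forall p q, P p -> P q -> P (p * q)) -> forall p, P p.
Proof.
move=> PC PX PD PM p; rewrite [p]mpolyE.
apply: (big_ind P); [by rewrite -mpolyC0 | exact: PD |].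
move=> mon _; rewrite -mul_mpolyC; apply: (PM) => //.
rewrite mpolyXE_id; apply: (big_ind P); [by rewrite -mpolyC1 | exact: PM |].
move=> i _; elim: (mon i) => [|k IH]; first by rewrite expr0 -mpolyC1.
by rewrite exprS; apply: PM.
Qed.

Lemma mderivXU (R : ringType) (m : nat) (i j : 'I_m) :
  ('X_i : {mpoly R[m]})^`M(j) = (i == j)%:R.
Proof.
rewrite mderivX mnm1E; case: eqP => [->|_]; last by rewrite scale0r.
rewrite (_ : (U_(j) - U_(j))%MM = 0%MM) ?mpolyX0 ?scale1r //.
by apply/mnmP => l; rewrite mnmBE subnn mnm0E.
Qed.

Section Composition.
Variable K : fieldType.

Lemma comp_mpoly_ptupleX (m k : nat) (F : 'I_m -> {mpoly K[k]}) i :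
  'X_i \mPo ptuple F = F i.
Proof. by rewrite comp_mpolyXU -tnth_nth tnth_mktuple. Qed.

Lemma eq_comp_mpoly_ptuple (m k : nat) (F H : 'I_m -> {mpoly K[k]}) p :
  F =1 H -> p \mPo ptuple F = p \mPo ptuple H.
Proof. by move=> eFH; congr (_ \mPo _); apply: eq_mktuple. Qed.

Lemma comp_mpoly_ptupleA (m k l : nat) (p : {mpoly K[m]})
    (F : 'I_m -> {mpoly K[k]}) (H : 'I_k -> {mpoly K[l]}) :
  (p \mPo ptuple F) \mPo ptuple H = p \mPo ptuple (fun i => F i \mPo ptuple H).
Proof.
elim/mpoly_ringind: p => [c | i | p q IHp IHq | p q IHp IHq].
- by rewrite !comp_mpolyC.
- by rewrite !comp_mpoly_ptupleX.
- by rewrite !raddfD /= IHp IHq.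
- by rewrite !rmorphM /= IHp IHq.
Qed.

Lemma mderiv_comp_ptuple (m k : nat) (p : {mpoly K[m]}) (F : 'I_m -> {mpoly K[k]}) j :
  (p \mPo ptuple F)^`M(j) = \sum_i (p^`M(i) \mPo ptuple F) * (F i)^`M(j).
Proof.
elim/mpoly_ringind: p => [c | i0 | p q IHp IHq | p q IHp IHq].
- rewrite comp_mpolyC mderivC big1 // => i _.
  by rewrite mderivC comp_mpoly0 mul0r.
- rewrite comp_mpoly_ptupleX -[LHS](sum_mul_delta (fun i => (F i)^`M(j)) i0).
  by apply: eq_bigr => i _; rewrite mderivXU rmorph_nat eq_sym mulrC.
- rewrite raddfD mderivD IHp IHq -big_split /=.
  by apply: eq_bigr => i _; rewrite mderivD raddfD mulrDl.
- rewrite rmorphM mderivM IHp IHq mulr_suml mulr_sumr -big_split /=.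
  apply: eq_bigr => i _; rewrite mderivM rmorphD !rmorphM /= mulrDl.
  by congr (_ + _); [exact: mulrAC | exact: mulrA].
Qed.

End Composition.

Section Jacobian.
Variables (K : fieldType) (m : nat).
Implicit Types F H : 'I_m -> {mpoly K[m]}.

Lemma jacobian_pcomp F H :
  jacobian (Defs.pcomp F H) = map_mx (comp_mpoly (ptuple H)) (jacobian F) *m jacobian H.
Proof.
apply/matrixP => i j; rewrite !mxE mderiv_comp_ptuple.
by apply: eq_bigr => k _; rewrite !mxE.
Qed.

Lemma jacobianX : jacobian (fun i => 'X_i : {mpoly K[m]}) = 1%:M.
Proof. by apply/matrixP => i j; rewrite !mxE mderivXU. Qed.

Lemma det_jacobian_unit F H :
  (forall i, Defs.pcomp F H i = 'X_i) -> \det (jacobian H) \is a GRing.unit.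
Proof.
move=> FH_id; have : jacobian (Defs.pcomp F H) = 1%:M.
  by rewrite -jacobianX; apply/matrixP => i j; rewrite !mxE FH_id.
rewrite jacobian_pcomp => /(congr1 determinant).
rewrite det_mulmx det_map_mx det1 mulrC => detJ.
by apply/unitrPr; exists (\det (jacobian F) \mPo ptuple H).
Qed.

End Jacobian.

Section LeftRight.
Variables (T : Type) (n : nat).

Definition lrfun (a b : 'I_n -> T) (k : 'I_(n + n)) : T :=
  match split k with inl i => a i | inr j => b j end.

Lemma lrfun_lshift a b i : lrfun a b (lshift n i) = a i.
Proof. by rewrite /lrfun (unsplitK (inl i)). Qed.

Lemma lrfun_rshift a b j : lrfun a b (rshift n j) = b j.
Proof. by rewrite /lrfun (unsplitK (inr j)). Qed.

End LeftRight.

Section Embedding.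
Variables (K : fieldType) (n : nat).
Implicit Types p q : {mpoly K[n]}.

HB.instance Definition _ := GRing.RMorphism.copy (@incx K n)
  (comp_mpoly (ptuple (@xvar K n))).

Lemma incxZ c p : incx (c *: p) = c *: incx p.
Proof. exact: comp_mpolyZ. Qed.

Lemma incxM : {morph @incx K n : p q / p * q}.
Proof. exact: rmorphM. Qed.

Lemma incx1 : @incx K n 1 = 1.
Proof. exact: rmorph1. Qed.

Lemma incx_sum (I : finType) (G : I -> {mpoly K[n]}) :
  incx (\sum_i G i) = \sum_i incx (G i).
Proof. exact: rmorph_sum. Qed.

Lemma incx_comp_ptuple (l : nat) p (P : 'I_(n + n) -> {mpoly K[l]}) :
  incx p \mPo ptuple P = p \mPo ptuple (fun i => P (lshift n i)).
Proof.
by rewrite comp_mpoly_ptupleA; apply: eq_comp_mpoly_ptuple => i; rewrite comp_mpoly_ptupleX.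
Qed.

Lemma incx_comp_lrfun (l : nat) p (a b : 'I_n -> {mpoly K[l]}) :
  incx p \mPo ptuple (lrfun a b) = p \mPo ptuple a.
Proof.
by rewrite incx_comp_ptuple; apply: eq_comp_mpoly_ptuple => i; rewrite lrfun_lshift.
Qed.

Lemma yvar_comp_ptuple (l : nat) j (P : 'I_(n + n) -> {mpoly K[l]}) :
  yvar K j \mPo ptuple P = P (rshift n j).
Proof. exact: comp_mpoly_ptupleX. Qed.

Local Notation xproj := (lrfun (fun i => 'X_i) (fun=> 0) : 'I_(n + n) -> {mpoly K[n]}).

Lemma incxK : cancel (@incx K n) (comp_mpoly (ptuple xproj)).
Proof. by move=> p; rewrite incx_comp_lrfun comp_mpoly_id. Qed.

Lemma incx_eq0 p : (incx p == 0) = (p == 0).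
Proof. by rewrite -(inj_eq (can_inj incxK)) rmorph0. Qed.

Lemma incx_unit p : (incx p \is a GRing.unit) = (p \is a GRing.unit).
Proof.
apply/idP/idP => [incx_p_unit|]; last exact: rmorph_unit.
by rewrite -(incxK p); apply: rmorph_unit.
Qed.

Lemma mderiv_incx_lshift p i : (incx p)^`M(lshift n i) = incx p^`M(i).
Proof.
rewrite /incx mderiv_comp_ptuple.
rewrite -[RHS](sum_mul_delta (fun j => p^`M(j) \mPo ptuple (@xvar K n)) i).
by apply: eq_bigr => j _; rewrite mderivXU (inj_eq (@lshift_inj _ _)).
Qed.

Lemma mderiv_incx_rshift p j : (incx p)^`M(rshift n j) = 0.
Proof.
rewrite /incx mderiv_comp_ptuple big1 // => i _.
by rewrite mderivXU eq_lrshift mulr0.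
Qed.

Lemma mderiv_yvar_lshift j i : (yvar K j)^`M(lshift n i) = 0.
Proof. by rewrite mderivXU eq_rlshift. Qed.

Lemma mderiv_yvar_rshift j i : (yvar K j)^`M(rshift n i) = (j == i)%:R.
Proof. by rewrite mderivXU (inj_eq (@rshift_inj _ _)). Qed.

End Embedding.

Section Gradient.
Variables (K : fieldType) (n : nat) (f : {mpoly K[n]}) (F : 'I_n -> {mpoly K[n]}).
Local Notation G := (gradG f F).
Local Notation J := (jacobian F).

Lemma gradG_lshift i :
  G (lshift n i) = incx f^`M(i) + \sum_j yvar K j * incx (F j)^`M(i).
Proof.
rewrite /gradG mderivD mderiv_incx_lshift; congr (_ + _).
rewrite [LHS]raddf_sum /=; apply: eq_bigr => j _.
by rewrite mderivM mderiv_yvar_lshift mul0r add0r mderiv_incx_lshift.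
Qed.

Lemma gradG_rshift j : G (rshift n j) = incx (F j).
Proof.
rewrite /gradG mderivD mderiv_incx_rshift add0r [LHS]raddf_sum /=.
rewrite -[RHS](sum_mul_delta (fun l => incx (F l)) j); apply: eq_bigr => l _.
by rewrite mderivM mderiv_yvar_rshift mderiv_incx_rshift mulr0 addr0 mulrC.
Qed.

Lemma mderiv_gradGC k l : (G k)^`M(l) = (G l)^`M(k).
Proof. exact: mderiv_comm. Qed.

Lemma jacobian_gradG : jacobian G =
  block_mx (\matrix_(i, j) (G (lshift n i))^`M(lshift n j))
           (map_mx (@incx K n) J^T) (map_mx (@incx K n) J) 0.
Proof.
apply/matrixP => k l; rewrite -(splitK k) -(splitK l).
case: (split k) => i; case: (split l) => j /=.
- by rewrite block_mxEul !mxE.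
- by rewrite block_mxEur !mxE mderiv_gradGC gradG_rshift mderiv_incx_lshift.
- by rewrite block_mxEdl !mxE gradG_rshift mderiv_incx_lshift.
- by rewrite block_mxEdr !mxE gradG_rshift mderiv_incx_rshift.
Qed.

Lemma det_jacobian_gradG :
  \det (jacobian G) = (-1) ^+ n * incx (\det J) ^+ 2.
Proof. by rewrite jacobian_gradG det_block_mx0 !det_map_mx det_tr -mulrA. Qed.

End Gradient.

Section GradientInverse.
Variables (K : fieldType) (n : nat) (f : {mpoly K[n]}) (F H : 'I_n -> {mpoly K[n]}).
Hypotheses (FH : forall i, Defs.pcomp F H i = 'X_i)
           (HF : forall i, Defs.pcomp H F i = 'X_i).
Local Notation G := (gradG f F).
Local Notation J := (jacobian F).

Let Hy i := H i \mPo ptuple (@yvar K n).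
Let at_Hy := comp_mpoly (ptuple Hy).
Let xsub_grad_at_Hy : 'cV[{mpoly K[n + n]}]_n := \col_i (xvar K i - at_Hy f^`M(i)).

(* Solving [G(x, y) = (u, v)] gives [x = H(v)] and [J(x)^T y = u - grad f(x)]. *)
Let Phi := lrfun Hy (fun i => (map_mx at_Hy (invmx J^T) *m xsub_grad_at_Hy) i 0).

Let unitmx_tr_jacobian : J^T \in unitmx.
Proof. by rewrite unitmxE det_tr (det_jacobian_unit HF). Qed.

Let Hy_comp_gradG i : Hy i \mPo ptuple G = xvar K i.
Proof.
rewrite comp_mpoly_ptupleA.
rewrite (@eq_comp_mpoly_ptuple _ _ _ _ (fun j => incx (F j))); last first.
  by move=> j; rewrite comp_mpoly_ptupleX gradG_rshift.
have := HF i; rewrite /Defs.pcomp => HFi.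
by rewrite -comp_mpoly_ptupleA HFi comp_mpoly_ptupleX.
Qed.

Let at_Hy_comp_gradG p : at_Hy p \mPo ptuple G = incx p.
Proof.
by rewrite comp_mpoly_ptupleA; apply: eq_comp_mpoly_ptuple => i; rewrite Hy_comp_gradG.
Qed.

Let gradG_comp_inverse k : Defs.pcomp G Phi k = 'X_k.
Proof.
rewrite /Defs.pcomp -(splitK k); case: (split k) => i /=.
- rewrite gradG_lshift raddfD /= incx_comp_lrfun (raddf_sum (comp_mpoly (ptuple Phi))) /=.
  have -> : \sum_j (yvar K j * incx (F j)^`M(i) \mPo ptuple Phi) =
      (map_mx at_Hy J^T *m (map_mx at_Hy (invmx J^T) *m xsub_grad_at_Hy)) i 0.
    rewrite mxE; apply: eq_bigr => j _.
    by rewrite rmorphM /= yvar_comp_ptuple /Phi lrfun_rshift incx_comp_lrfun !mxE mulrC.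
  rewrite mulmxA -map_mxM mulmxV ?unitmx_tr_jacobian // map_mx1 mul1mx mxE.
  by rewrite addrC subrK.
- have /(congr1 (comp_mpoly (ptuple (@yvar K n)))) := FH i.
  by rewrite gradG_rshift incx_comp_lrfun comp_mpoly_ptupleA comp_mpoly_ptupleX.
Qed.

Let inverse_comp_gradG k : Defs.pcomp Phi G k = 'X_k.
Proof.
rewrite /Defs.pcomp -(splitK k); case: (split k) => i /=.
  by rewrite /Phi lrfun_lshift Hy_comp_gradG.
rewrite /Phi lrfun_rshift.
rewrite (_ : _ \mPo _ = map_mx (comp_mpoly (ptuple G))
                        (map_mx at_Hy (invmx J^T) *m xsub_grad_at_Hy) i 0);
  last by rewrite [RHS]mxE.
rewrite map_mxM -map_mx_comp.
have -> : map_mx (comp_mpoly (ptuple G) \o at_Hy) (invmx J^T) = map_mx (@incx K n) (invmx J^T).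
  by apply/matrixP => a b; rewrite !mxE /= at_Hy_comp_gradG.
have -> : map_mx (comp_mpoly (ptuple G)) xsub_grad_at_Hy =
    map_mx (@incx K n) J^T *m \col_j yvar K j.
  apply/matrixP => a b; rewrite !mxE raddfB /= at_Hy_comp_gradG comp_mpoly_ptupleX.
  rewrite gradG_lshift addrC addKr; apply: eq_bigr => j _.
  by rewrite !mxE mulrC.
by rewrite mulmxA -map_mxM mulVmx ?unitmx_tr_jacobian // map_mx1 mul1mx mxE.
Qed.

Lemma gradG_pinvertible : pinvertible G.
Proof. by exists Phi; split; [exact: gradG_comp_inverse | exact: inverse_comp_gradG]. Qed.

End GradientInverse.

Section GradientInverseConverse.
Variables (K : fieldType) (n : nat) (f : {mpoly K[n]}) (F : 'I_n -> {mpoly K[n]}).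
Variable Phi : 'I_(n + n) -> {mpoly K[n + n]}.
Local Notation G := (gradG f F).
Local Notation J := (jacobian F).
Hypotheses (GPhi : forall k, Defs.pcomp G Phi k = 'X_k)
           (PhiG : forall k, Defs.pcomp Phi G k = 'X_k).

Let unitmx_tr_jacobian : J^T \in unitmx.
Proof.
have := det_jacobian_unit PhiG; rewrite det_jacobian_gradG unitrM => /andP[_].
by rewrite unitrX_pos // incx_unit unitmxE det_tr.
Qed.

(* [S x = (x, y(x))] with [y(x)] the solution of [grad f + J^T y = 0]. *)
Let S := lrfun (fun i => 'X_i) (fun i => - (invmx J^T *m \col_j f^`M(j)) i 0).
Let T := lrfun (fun=> 0) (fun i => 'X_i) : 'I_(n + n) -> {mpoly K[n]}.
Let Finv i := Phi (lshift n i) \mPo ptuple T.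

Let gradG_comp_S k : G k \mPo ptuple S = T k \mPo ptuple F.
Proof.
rewrite -(splitK k); case: (split k) => i /=; rewrite /T ?lrfun_lshift ?lrfun_rshift.
- rewrite gradG_lshift raddfD /= incx_comp_lrfun comp_mpoly_id raddf_sum /= comp_mpoly0.
  under eq_bigr => j _ do
    rewrite rmorphM /= incx_comp_lrfun comp_mpoly_id yvar_comp_ptuple /S lrfun_rshift.
  rewrite (_ : \sum_j _ = (J^T *m - (invmx J^T *m \col_j f^`M(j))) i 0).
    by rewrite mulmxN mulmxA mulmxV // mul1mx !mxE subrr.
  by rewrite mxE; apply: eq_bigr => j _; rewrite !mxE mulrC.
- by rewrite gradG_rshift incx_comp_lrfun comp_mpoly_id comp_mpoly_ptupleX.
Qed.

Let F_comp_Finv i : Defs.pcomp F Finv i = 'X_i.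
Proof.
have /(congr1 (comp_mpoly (ptuple T))) := GPhi (rshift n i).
rewrite /Defs.pcomp gradG_rshift incx_comp_ptuple comp_mpoly_ptupleA.
by rewrite comp_mpoly_ptupleX /T lrfun_rshift.
Qed.

Let Finv_comp_F i : Defs.pcomp Finv F i = 'X_i.
Proof.
have /(congr1 (comp_mpoly (ptuple S))) := PhiG (lshift n i).
rewrite /Defs.pcomp comp_mpoly_ptupleA comp_mpoly_ptupleX /S lrfun_lshift => <-.
rewrite /Finv !comp_mpoly_ptupleA; apply: eq_comp_mpoly_ptuple => k.
exact/esym/gradG_comp_S.
Qed.

Lemma pinvertible_of_gradG : pinvertible F.
Proof. by exists Finv; split; [exact: F_comp_Finv | exact: Finv_comp_F]. Qed.

End GradientInverseConverse.

Section LinearInY.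
Variables (K : fieldType) (n : nat).
Local Notation RR := {mpoly K[n + n]}.

(* [yscale p] is [p(x, t y)] as a polynomial in [t]; its size is [1 + deg_y p]. *)
Definition yscale : RR -> {poly RR} :=
  mmap (polyC \o @mpolyC (n + n) K)%FUN
       (lrfun (fun i => (xvar K i)%:P) (fun j => (yvar K j)%:P * 'X)).

HB.instance Definition _ := GRing.RMorphism.on yscale.

Local Notation yzero := (lrfun (@xvar K n) (fun=> 0)).
Local Notation yunit j := (lrfun (@xvar K n) (fun l => (l == j)%:R)).

Lemma yscaleC c : yscale c%:MP = c%:MP%:P.
Proof. exact: mmapC. Qed.

Lemma yscaleD : {morph yscale : p q / p + q}.
Proof. exact: rmorphD. Qed.

Lemma yscaleM : {morph yscale : p q / p * q}.
Proof. exact: rmorphM. Qed.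

Lemma yscaleX k :
  yscale 'X_k = lrfun (fun i => (xvar K i)%:P) (fun j => (yvar K j)%:P * 'X) k.
Proof. by rewrite /yscale mmapX mmap1U. Qed.

Lemma horner_yscale1 p : (yscale p).[1] = p.
Proof.
elim/mpoly_ringind: p => [c | k | p q IHp IHq | p q IHp IHq].
- by rewrite yscaleC hornerC.
- rewrite yscaleX -(splitK k); case: (split k) => i /=.
  + by rewrite lrfun_lshift hornerC.
  + by rewrite lrfun_rshift hornerMX hornerC mulr1.
- by rewrite yscaleD hornerD; congr (_ + _).
- by rewrite yscaleM hornerM; congr (_ * _).
Qed.

Lemma horner_yscale0 p : (yscale p).[0] = p \mPo ptuple yzero.
Proof.
elim/mpoly_ringind: p => [c | k | p q IHp IHq | p q IHp IHq].
- by rewrite yscaleC hornerC comp_mpolyC.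
- rewrite yscaleX comp_mpoly_ptupleX -(splitK k); case: (split k) => i /=.
  + by rewrite !lrfun_lshift hornerC.
  + by rewrite !lrfun_rshift hornerMX mulr0.
- by rewrite yscaleD hornerD raddfD; congr (_ + _).
- by rewrite yscaleM hornerM rmorphM; congr (_ * _).
Qed.

Lemma yscale_incx (p : {mpoly K[n]}) : yscale (incx p) = (incx p)%:P.
Proof.
elim/mpoly_ringind: p => [c | i | p q IHp IHq | p q IHp IHq].
- by rewrite /incx comp_mpolyC yscaleC.
- by rewrite /incx comp_mpoly_ptupleX yscaleX lrfun_lshift.
- by rewrite rmorphD yscaleD IHp IHq polyCD.
- by rewrite rmorphM yscaleM IHp IHq polyCM.
Qed.

Lemma yscale_yvar j : yscale (yvar K j) = (yvar K j)%:P * 'X.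
Proof. by rewrite yscaleX lrfun_rshift. Qed.

Lemma size_yscale_eq1 q : size (yscale q) = 1%N ->
  yscale q = q%:P /\ q = q \mPo ptuple yzero.
Proof.
move=> /eq_leq/size1_polyC yqC.
have yq : yscale q = q%:P by rewrite yqC -{2}(horner_yscale1 q) {2}yqC hornerC.
by split=> //; rewrite -horner_yscale0 yq hornerC.
Qed.

Lemma comp_yzero_yunit q j : (q \mPo ptuple yzero) \mPo ptuple (yunit j) = q \mPo ptuple yzero.
Proof.
rewrite comp_mpoly_ptupleA; apply: eq_comp_mpoly_ptuple => k.
rewrite -(splitK k); case: (split k) => i /=.
- by rewrite !lrfun_lshift comp_mpoly_ptupleX lrfun_lshift.
- by rewrite !lrfun_rshift comp_mpoly0.
Qed.

Lemma yscale_eq0 q : (yscale q == 0) = (q == 0).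
Proof.
apply/eqP/eqP => [q0|->]; last exact: rmorph0.
by rewrite -(horner_yscale1 q) q0 horner0.
Qed.

Variables (a : {mpoly K[n]}) (c e : 'I_n -> {mpoly K[n]}).
Hypothesis ec1 : \sum_j e j * c j = 1.

Let b := \sum_j yvar K j * incx (c j).
Let p := incx a + b.

Let b_yunit j : b \mPo ptuple (yunit j) = incx (c j).
Proof.
rewrite raddf_sum /= -[RHS](sum_mul_delta (fun l => incx (c l)) j).
apply: eq_bigr => l _; rewrite rmorphM /= yvar_comp_ptuple lrfun_rshift.
by rewrite incx_comp_lrfun mulrC.
Qed.

Let b_neq0 : b != 0.
Proof.
have [j0 c_j0] : exists j, c j != 0.
  apply/existsP; apply: contraT; rewrite negb_exists => /forallP c0.
  move: ec1; rewrite big1 => [/eqP|j _]; first by rewrite eq_sym oner_eq0.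
  by rewrite (eqP (negPn (c0 j))) mulr0.
apply: contra c_j0 => /eqP b0.
by rewrite -incx_eq0 -(b_yunit j0) b0 rmorph0.
Qed.

Let yscale_p : yscale p = b%:P * 'X + (incx a)%:P.
Proof.
rewrite yscaleD yscale_incx addrC; congr (_ + _).
rewrite (big_morph yscale yscaleD (rmorph0 _)) rmorph_sum mulr_suml.
by apply: eq_bigr => j _; rewrite yscaleM yscale_yvar yscale_incx mulrAC -polyCM.
Qed.

Let size_yscale_p : size (yscale p) = 2%N.
Proof.
by rewrite yscale_p size_MXaddC polyC_eq0 (negbTE b_neq0) /= size_polyC b_neq0.
Qed.

Let p_neq0 : p != 0.
Proof. by rewrite -yscale_eq0 -size_poly_eq0 size_yscale_p. Qed.

(* A factor of [p] of [y]-degree zero divides every [c j], hence [1]. *)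
Let factor_unit q r : p = q * r -> size (yscale q) = 1%N -> q \is a GRing.unit.
Proof.
move=> pqr /size_yscale_eq1[yq qx]; set s := (yscale r)`_1.
have bqs : b = q * s.
  by rewrite -[b](coef1_MXaddC b (incx a)) -yscale_p pqr yscaleM yq coefCM.
have c_qs j : incx (c j) = q * (s \mPo ptuple (yunit j)).
  by rewrite -b_yunit bqs rmorphM /= {1}qx comp_yzero_yunit -qx.
apply/unitrPr; exists (\sum_j incx (e j) * (s \mPo ptuple (yunit j))).
rewrite -[RHS]incx1 -[in RHS]ec1 incx_sum mulr_sumr.
by apply: eq_bigr => j _; rewrite incxM c_qs mulrCA.
Qed.

Lemma mirreducible_linear_in_y :
  mirreducible (incx a + \sum_j yvar K j * incx (c j)).
Proof.
rewrite -/b -/p; split; [exact: p_neq0 | split].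
  apply/negP => p_unit; have : yscale p \is a GRing.unit by apply: rmorph_unit.
  by rewrite poly_unitE size_yscale_p.
move=> q r pqr.
have q_neq0 : q != 0 by apply: contraNneq p_neq0 => q0; rewrite pqr q0 mul0r.
have r_neq0 : r != 0 by apply: contraNneq p_neq0 => r0; rewrite pqr r0 mulr0.
have := size_yscale_p; rewrite pqr yscaleM size_mul ?yscale_eq0 //.
rewrite -!(yscale_eq0, size_poly_gt0) in q_neq0 r_neq0.
move=> /(addn_pred_eq2 q_neq0 r_neq0)[sq1|sr1].
- by left; apply: factor_unit pqr sq1.
- by right; apply: factor_unit _ sr1; rewrite pqr mulrC.
Qed.

End LinearInY.

Section LinearCombination.
Variables (K : fieldType) (n : nat) (f : {mpoly K[n]}) (F : 'I_n -> {mpoly K[n]}).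
Local Notation G := (gradG f F).

Lemma gradG_linear_combination (mu : 'I_(n + n) -> K) (mu0 : K) :
  \sum_k mu k *: G k + mu0%:MP =
  incx (\sum_i mu (rshift n i) *: F i + \sum_i mu (lshift n i) *: f^`M(i) + mu0%:MP)
  + \sum_j yvar K j * incx (\sum_i mu (lshift n i) *: (F j)^`M(i)).
Proof.
have sum_yshift :
    \sum_i mu (rshift n i) *: G (rshift n i) = incx (\sum_i mu (rshift n i) *: F i).
  by rewrite incx_sum; apply: eq_bigr => i _; rewrite gradG_rshift incxZ.
have sum_ypart : \sum_j yvar K j * incx (\sum_i mu (lshift n i) *: (F j)^`M(i)) =
    \sum_i mu (lshift n i) *: \sum_j yvar K j * incx (F j)^`M(i).
  under eq_bigr => j _ do rewrite incx_sum mulr_sumr.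
  rewrite exchange_big; apply: eq_bigr => i _; rewrite scaler_sumr.
  by apply: eq_bigr => j _; rewrite incxZ scalerAr.
have sum_xshift : \sum_i mu (lshift n i) *: G (lshift n i) =
    incx (\sum_i mu (lshift n i) *: f^`M(i))
    + \sum_j yvar K j * incx (\sum_i mu (lshift n i) *: (F j)^`M(i)).
  rewrite sum_ypart incx_sum -big_split; apply: eq_bigr => i _.
  by rewrite gradG_lshift scalerDr incxZ.
rewrite big_split_ord /= sum_yshift sum_xshift !rmorphD /= [incx _%:MP]comp_mpolyC.
set A := incx (\sum_i _ *: f^`M(_)); set B := incx (\sum_i _ *: F _); set Y := \sum_j _.
by rewrite (addrAC A Y B) (addrAC (A + B) Y) (addrC B A).
Qed.

End LinearCombination.

Lemma keller_directional_bezout (K : fieldType) (n : nat) (F : 'I_n -> {mpoly K[n]})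
    (v : 'I_n -> K) (i0 : 'I_n) :
  keller F -> v i0 != 0 ->
  exists e : 'I_n -> {mpoly K[n]}, \sum_j e j * (\sum_i v i *: (F j)^`M(i)) = 1.
Proof.
case=> c [c_neq0 detJ] v_neq0.
pose vc : 'cV[{mpoly K[n]}]_n := \col_i (v i)%:MP.
have Jv j : \sum_i v i *: (F j)^`M(i) = (jacobian F *m vc) j 0.
  by rewrite mxE; apply: eq_bigr => i _; rewrite !mxE mulrC mul_mpolyC.
exists (fun j => (c * v i0)^-1 *: \adj (jacobian F) i0 j).
under eq_bigr => j _ do rewrite Jv -scalerAl.
rewrite -scaler_sumr (_ : \sum_j _ = (\adj (jacobian F) *m (jacobian F *m vc)) i0 0).
  rewrite mulmxA mul_adj_mx detJ mul_scalar_mx !mxE -mpolyCM -mul_mpolyC -mpolyCM.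
  by rewrite mulVf ?mulf_neq0.
by rewrite [RHS]mxE.
Qed.

Theorem lemma7p5 (K : fieldType) (n : nat) (charK : [pchar K] =i pred0)
    (F : 'I_n -> {mpoly K[n]}) (f : {mpoly K[n]}) :
  [/\ \det (jacobian (gradG f F)) = (-1) ^+ n * incx (\det (jacobian F)) ^+ 2,
      pinvertible F <-> pinvertible (gradG f F)
    & keller F ->
      forall (mu : 'I_(n + n) -> K) (mu0 : K),
        (exists i : 'I_n, mu (lshift n i) != 0) ->
        mirreducible (\sum_(k < n + n) mu k *: gradG f F k + mu0%:MP)].
Proof.
split; first exact: det_jacobian_gradG.
  split=> [[H [FH HF]] | [Phi [GPhi PhiG]]].
  - exact: gradG_pinvertible FH HF.
  - exact: pinvertible_of_gradG GPhi PhiG.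
move=> kellerF mu mu0 [i0 mu_i0]; rewrite gradG_linear_combination.
have [e ec1] := keller_directional_bezout (v := fun i => mu (lshift n i)) kellerF mu_i0.
exact: mirreducible_linear_in_y ec1.
Qed.
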